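(* Let $r\ge 1$ and $\mathbf{s}\in\mathbb{Z}^r$. Suppose $\boldsymbol{\lambda},\boldsymbol{\mu}\in\Lambda^{(r)}$ satisfy $(\boldsymbol{\lambda},\mathbf{s})\approx_e(\boldsymbol{\mu},\mathbf{s})$. Then $\Psi_r(\boldsymbol{\lambda},\mathbf{s})\approx_e\Psi_r(\boldsymbol{\mu},\mathbf{s})$ in $\mathcal{A}_e$.
   Context: Fix an integer $e\ge 2$. A partition is a weakly decreasing sequence $\lambda=(\lambda_1,\lambda_2,\dots)$ of non-negative integers with finite sum $|\lambda|$; $\Lambda$ denotes the set of partitions and $\Lambda^{(m)}$ the set of $m$-multipartitions, i.e. $m$-tuples $\boldsymbol\lambda=(\lambda^{(1)},\dots,\lambda^{(m)})$ of partitions, with $|\boldsymbol\lambda|=\sum_k|\lambda^{(k)}|$. A $\beta$-set is a subset $B\subseteq\mathbb{Z}$ containing all sufficiently small integers and no sufficiently large ones. For $\lambda\in\Lambda$ and $s\in\mathbb{Z}$ set $B_s(\lambda)=\{\lambda_i-i+s : i\ge 1\}$; every $\beta$-set equals $B_s(\lambda)$ for a unique pair $(\lambda,s)$. For $N\ge 2$ let $\mathcal{A}_N=\Lambda\times\mathbb{Z}$ (abacus configurations with $N$ runners: a bead at each position $b\in B_s(\lambda)$, position $b=aN+i$, $0\le i<N$, lying on runner $i$) and $\mathcal{A}_N^m=\Lambda^{(m)}\times\mathbb{Z}^m$, where $(\boldsymbol\lambda,\mathbf{s})$ is identified with the $m$-tuple of $\beta$-sets $(B_{s_1}(\lambda^{(1)}),\dots,B_{s_m}(\lambda^{(m)}))$.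 Blocks: for $(\boldsymbol\lambda,\mathbf{s})\in\mathcal{A}_N^m$, its $N$-residue multiset is the multiset of the values $s_k+y-x \bmod N$ over all nodes $(x,y,k)$ with $x\ge1$, $1\le y\le\lambda^{(k)}_x$, $1\le k\le m$. Define $(\boldsymbol\lambda,\mathbf{s})\approx_N(\boldsymbol\mu,\mathbf{s}')$ iff $\mathbf{s}=\mathbf{s}'$, $|\boldsymbol\lambda|=|\boldsymbol\mu|$ and the $N$-residue multisets coincide. Its equivalence classes are called blocks. (For $N=e$ these are exactly the sets of multipartitions indexing Specht modules in a common block of the Ariki–Koike algebra $\mathcal{H}_{m,n}(q,(q^{s_1},\dots,q^{s_m}))$, $q$ a primitive $e$-th root of unity.) Uglov's map: for $1\le k\le r$ define $\psi_k:\mathbb{Z}\to\mathbb{Z}$ by $\psi_k(ae+i)=((a+1)r-k)e+i$ for $a\in\mathbb{Z}$, $0\le i<e$. For $(\boldsymbol\lambda,\mathbf{s})\in\mathcal{A}_e^r$ the set $B=\bigsqcup_{k=1}^r\psi_k(B_{s_k}(\lambda^{(k)}))$ is a $\beta$-set, and $\Psi_r(\boldsymbol\lambda,\mathbf{s})$ is the unique $(\tilde\lambda,\tilde s)\in\mathcal{A}_e$ with $B_{\tilde s}(\tilde\lambda)=B$. $\Psi_r:\mathcal{A}_e^r\to\mathcal{A}_e$ is a bijection; $\Phi_r=\Psi_r^{-1}$. *)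

From mathcomp Require Import all_boot all_order all_algebra.
Set Implicit Arguments. Unset Strict Implicit. Unset Printing Implicit Defensive.
Import Order.TTheory GRing.Theory Num.Theory.
Local Open Scope ring_scope.

(* A partition: a weakly decreasing list of positive parts (trailing zeros
   of the infinite sequence dropped); lambda_i = nth 0 l (i-1). *)
Definition is_part (l : seq nat) : bool :=
  sorted geq l && all (fun x => (0 < x)%N) l.

Definition beta_set (s : int) (l : seq nat) (b : int) : Prop :=
  exists i : nat, b = (nth 0%N l i)%:Z - (i.+1)%:Z + s.

(* number of nodes (x,y,k) of (lam, s) with N-residue s_k + y - x = c mod N
   (0-indexed x,y here: node (x+1,y+1,k)) *)
Definition res_count (N : nat) (m : nat) (lam : 'I_m -> seq nat)
  (s : 'I_m -> int) (c : int) : nat :=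
  (\sum_(k < m) \sum_(x < size (lam k)) \sum_(y < nth 0%N (lam k) x)
     (((s k + y%:Z - x%:Z) %% N%:Z)%Z == c))%N.

Definition msize (m : nat) (lam : 'I_m -> seq nat) : nat :=
  (\sum_(k < m) sumn (lam k))%N.

Definition block_equiv (N m : nat) (lam : 'I_m -> seq nat) (s : 'I_m -> int)
  (mu : 'I_m -> seq nat) (s' : 'I_m -> int) : Prop :=
  s =1 s' /\ msize lam = msize mu /\
  forall c : int, res_count N lam s c = res_count N mu s' c.

Definition block_equiv1 (N : nat) (l : seq nat) (s : int) (l' : seq nat) (s' : int)
  : Prop :=
  block_equiv N (fun _ : 'I_1 => l) (fun _ => s) (fun _ => l') (fun _ => s').

(* psi_k (a e + i) = ((a+1) r - k) e + i, 0 <= i < e; k = k0 + 1 with k0 : 'I_r *)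
Definition psi (e r : nat) (k0 : nat) (b : int) : int :=
  (((b %/ e%:Z)%Z + 1) * r%:Z - (k0.+1)%:Z) * e%:Z + (b %% e%:Z)%Z.

Definition uglov_set (e r : nat) (lam : 'I_r -> seq nat) (s : 'I_r -> int)
  (b : int) : Prop :=
  exists (k : 'I_r) (b' : int), beta_set (s k) (lam k) b' /\ b = psi e r k b'.

Definition Psi_rel (e r : nat) (lam : 'I_r -> seq nat) (s : 'I_r -> int)
  (lt : seq nat) (st : int) : Prop :=
  is_part lt /\ forall b : int, beta_set st lt b <-> @uglov_set e r lam s b.
Arguments Psi_rel e {r} lam s lt st.
Arguments block_equiv N {m} lam s mu s'.

From mathcomp Require Import all_boot all_order all_algebra zify ring.
Set Implicit Arguments. Unset Strict Implicit. Unset Printing Implicit Defensive.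
Import Order.TTheory GRing.Theory Num.Theory.
Local Open Scope ring_scope.

(* For [F : int -> int], the excess of [F] on [(l, s)] is the sum of [F] over
   the beads of [B_s(l)] minus the same sum for the empty partition of charge
   [s]. It equals [|l|] for [F = id] and the number of nodes of residue [c] for
   [F b = (b - c) %/ e]. The beta-set of [Psi_r(lam, s)] is the disjoint union
   of the [psi_k(B_{s_k}(lam^(k)))], and composing either function with [psi_k]
   yields a combination of it and of [b %/ e] plus a constant depending only on
   [k]. Hence size and residue counts of [Psi_r(lam, s)] are determined by those
   of [(lam, s)]; counting beads shows that its charge is [\sum_k s_k]. All sums
   are made finite by truncating the beta-sets below a common bound. *)

Lemma ler_mul_addr_rem (X Y d rho : int) : 0 < d -> 0 <= rho < d ->
  (Y * d <= X * d + rho) = (Y <= X).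
Proof.
move=> hd hrho; apply/idP/idP => H.
  case: (lerP Y X) => // hXY.
  have : (X + 1) * d <= Y * d by rewrite ler_pM2r //; lia.
  lia.
have : Y * d <= X * d by rewrite ler_pM2r.
lia.
Qed.

Lemma divmodz_mulD_small (q rho d : int) : 0 < d -> 0 <= rho < d ->
  ((q * d + rho) %/ d)%Z = q /\ ((q * d + rho) %% d)%Z = rho.
Proof.
move=> hd hrho; split; last by rewrite modzMDl modz_small //; lia.
by rewrite divzMDl ?divz_small ?addr0 //; lia.
Qed.

Section PsiMap.
Variables (e r : nat).
Hypothesis he : (0 < e)%N.

Lemma psi_divmodz (k : 'I_r) b :
  (psi e r k b %/ e%:Z)%Z = ((b %/ e%:Z)%Z + 1) * r%:Z - k.+1%:Z /\
  (psi e r k b %% e%:Z)%Z = (b %% e%:Z)%Z.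
Proof. by apply: divmodz_mulD_small; lia. Qed.

Lemma psi_geE (k : 'I_r) b A :
  (A * r%:Z * e%:Z <= psi e r k b) = (A * e%:Z <= b).
Proof.
rewrite /psi [in RHS](divz_eq b e%:Z).
have hk := ltn_ord k.
have -> : ((b %/ e%:Z)%Z + 1) * r%:Z - k.+1%:Z = (b %/ e%:Z)%Z * r%:Z + (r%:Z - k.+1%:Z)
  by ring.
by rewrite !ler_mul_addr_rem //; lia.
Qed.

Lemma psi_inj (k k' : 'I_r) b b' : psi e r k b = psi e r k' b' -> k = k' /\ b = b'.
Proof.
move=> H; have [d1 m1] := psi_divmodz k b; have [d2 m2] := psi_divmodz k' b'.
rewrite H d2 in d1; rewrite H m2 in m1.
have hk := ltn_ord k; have hk' := ltn_ord k'.
have hq : (b' %/ e%:Z)%Z = (b %/ e%:Z)%Z by nia.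
have hkk : k = k' :> nat by nia.
split; first exact: ord_inj.
by rewrite (divz_eq b e%:Z) (divz_eq b' e%:Z) hq m1.
Qed.

Lemma psi_surj b A : (0 < r)%N -> b < A * r%:Z * e%:Z ->
  exists (k : 'I_r) b', b' < A * e%:Z /\ b = psi e r k b'.
Proof.
move=> hr hb.
set q := (b %/ e%:Z)%Z; set rho := (b %% e%:Z)%Z.
have hrho : 0 <= rho < e%:Z by rewrite /rho; lia.
have hbE : b = q * e%:Z + rho by rewrite /q /rho -divz_eq.
(* [psi e r k] maps quotient [a] to [(a + 1) r - k - 1]; matching it with [q]
   forces [k = -(q + 1) mod r] and [a = -t - 1]. *)
set t := ((- (q + 1)) %/ r%:Z)%Z; set kk := ((- (q + 1)) %% r%:Z)%Z.
have hkk : 0 <= kk < r%:Z by rewrite /kk; lia.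
have htE : - (q + 1) = t * r%:Z + kk by rewrite /t /kk -divz_eq.
have hkr : (absz kk < r)%N by lia.
exists (Ordinal hkr), ((- t - 1) * e%:Z + rho).
have hq : q < A * r%:Z.
  have : ~~ (A * r%:Z * e%:Z <= q * e%:Z + rho) by rewrite -hbE -ltNge.
  by rewrite ler_mul_addr_rem -?ltNge //; lia.
have ht : - t <= A.
  have : (- t) * r%:Z < (A + 1) * r%:Z by nia.
  by rewrite ltr_pM2r; lia.
split; first by rewrite ltNge ler_mul_addr_rem //; lia.
rewrite /psi; have [-> ->] := @divmodz_mulD_small (- t - 1) rho e%:Z ltac:(lia) hrho.
by rewrite hbE /=; congr (_ * _ + _); lia.
Qed.

End PsiMap.

Definition bead (s : int) (l : seq nat) (i : nat) : int :=
  (nth 0%N l i)%:Z - (i.+1)%:Z + s.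

Definition beads (s : int) (l : seq nat) (n : nat) : seq int :=
  map (bead s l) (iota 0 n).

Section Beads.
Variables (s : int) (l : seq nat).
Hypothesis hl : is_part l.

Lemma part_nth_geq i j : (i <= j)%N -> (nth 0 l j <= nth 0 l i)%N.
Proof.
case/andP: hl => hs _ hij.
case: (ltnP j (size l)) => hj; last by rewrite nth_default.
have geq_trans : transitive geq by move=> a b c /= h1 h2; apply: leq_trans h2 h1.
by apply: (sorted_leq_nth geq_trans leqnn 0%N hs); rewrite ?inE //; lia.
Qed.

Lemma bead_ltn i j : (i < j)%N -> bead s l j < bead s l i.
Proof. by move=> hij; have := part_nth_geq (ltnW hij); rewrite /bead; lia. Qed.

Lemma beads_uniq n : uniq (beads s l n).
Proof.
rewrite map_inj_in_uniq ?iota_uniq // => i j _ _ hij.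
by apply/eqP; case: (ltngtP i j) => // /bead_ltn; rewrite hij ltxx.
Qed.

Lemma mem_beads L b : L <= s - (size l)%:Z ->
  (beta_set s l b /\ L <= b) <-> b \in beads s l (absz (s - L)%R).
Proof.
move=> hL; split.
  case=> [[i ->]] hb; apply/mapP; exists i => //; rewrite mem_iota /=.
  case: (ltnP i (absz (s - L)%R)) => // hi.
  by rewrite nth_default in hb; lia.
case/mapP=> i; rewrite mem_iota /= => hi ->; split; first by exists i.
by rewrite /bead; lia.
Qed.

End Beads.

Lemma beta_set_low s l b : b < s - (size l)%:Z -> beta_set s l b.
Proof. by move=> hb; exists (absz (s - b - 1)%R); rewrite nth_default; lia. Qed.

Lemma beta_set_add_top s l t : is_part l -> bead s l 0 < t ->
  exists2 l', is_part l' & forall b, beta_set (s + 1) l' b <-> b = t \/ beta_set s l b.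
Proof.
move=> hl; rewrite /bead /= => ht.
case: (ltrP s t) => hts.
  exists (absz (t - s)%R :: l).
    move: hl => /andP[hs hpos]; rewrite /is_part /= hpos andbT.
    apply/andP; split; last by lia.
    by case: l hs ht {hpos} => //= a l ->; rewrite andbT; lia.
  move=> b; split=> [[[|i]]|[->|[i ->]]] /=.
  - by left; lia.
  - by right; exists i; lia.
  - by exists 0%N => /=; lia.
  - by exists i.+1 => /=; lia.
(* otherwise [t = s], [l] is empty and the new bead is an empty row *)
have l0 : l = [::] by move: hl ht; case: l => // a l /andP[_ /= /andP[ha _]] /=; lia.
rewrite l0 nth_nil in ht; have -> : t = s by lia.
exists [::] => // b; split=> [[i ->]|[->|[i ->]]]; rewrite ?l0 ?nth_nil.
- by case: i => [|i]; [left | right; exists i]; rewrite ?nth_nil; lia.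
- by exists 0%N; rewrite nth_nil; lia.
- by exists i.+1; rewrite ?l0 !nth_nil; lia.
Qed.

Lemma partition_of_beads L (T : seq int) : sorted >%R T -> all (>= L) T ->
  exists l st, is_part l /\ forall b, beta_set st l b <-> b \in T \/ b < L.
Proof.
elim: T => [|t T IH] /=.
  move=> _ _; exists [::], L; split=> // b; split=> [[i ->]|[] // hb].
    by right; rewrite nth_nil; lia.
  by exists (absz (L - b - 1)%R); rewrite nth_nil; lia.
move=> hpath /andP[hLt hall].
have [l [st [hl hT]]] := IH (path_sorted hpath) hall.
have ht : bead st l 0 < t.
  have [hin|] := (hT (bead st l 0)).1 (ex_intro _ 0%N erefl); last by lia.
  have gt_trans : transitive (>%R : rel int) by move=> y x z h1 h2; exact: lt_trans h2 h1.
  by have /allP := order_path_min gt_trans hpath; apply.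
have [l' hl' hT'] := beta_set_add_top hl ht.
exists l', (st + 1); split=> // b; rewrite hT' hT inE.
split=> [[->|[hb|hb]]|[/orP[/eqP->|hb]|hb]].
- by left; rewrite eqxx.
- by left; rewrite hb orbT.
- by right.
- by left.
- by right; left.
- by right; right.
Qed.

Definition excess (F : int -> int) (s : int) (l : seq nat) : int :=
  \sum_(0 <= i < size l) (F (bead s l i) - F (s - (i.+1)%:Z)).

Lemma sum_beads F s l n : (size l <= n)%N ->
  \sum_(b <- beads s l n) F b = \sum_(0 <= i < n) F (s - (i.+1)%:Z) + excess F s l.
Proof.
move=> hn; rewrite big_map /excess /index_iota !subn0.
rewrite (eq_bigr (fun i => (F (bead s l i) - F (s - (i.+1)%:Z)) + F (s - (i.+1)%:Z)));
  last by move=> i _; rewrite subrK.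
rewrite big_split /= addrC; congr (_ + _).
rewrite -(subnKC hn) iotaD big_cat /= add0n [X in _ + X]big1_seq ?addr0 // => i.
move=> /andP[_]; rewrite mem_iota => /andP[hi _].
have -> : bead s l i = s - i.+1%:Z by rewrite /bead nth_default //; lia.
exact: subrr.
Qed.

Lemma excess_linear F G a s l :
  excess (fun b => F b + a * G b) s l = excess F s l + a * excess G s l.
Proof. by rewrite /excess mulr_sumr -big_split; apply: eq_bigr => i _ /=; ring. Qed.

Lemma excess_addr_const F c s l : excess (fun b => F b + c) s l = excess F s l.
Proof. by apply: eq_bigr => i _; ring. Qed.

Lemma excess_id s l : excess id s l = (sumn l)%:Z.
Proof.
have -> : (sumn l)%:Z = \sum_(x <- l) x%:Z.
  by elim: l => [|a l IH]; rewrite ?big_nil ?big_cons //= PoszD IH.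
by rewrite (big_nth 0%N) /excess; apply: eq_bigr => i _; rewrite /bead /=; lia.
Qed.

Definition part_res_count (e : nat) (s : int) (l : seq nat) (c : int) : nat :=
  (\sum_(x < size l) \sum_(y < nth 0%N l x) (((s + y%:Z - x%:Z) %% e%:Z)%Z == c))%N.

Lemma res_count1 e s l c :
  res_count e (fun _ : 'I_1 => l) (fun _ => s) c = part_res_count e s l c.
Proof. by rewrite /res_count big_ord1. Qed.

Lemma res_countE e r (lam : 'I_r -> seq nat) s c :
  (res_count e lam s c)%:Z = \sum_(k < r) (part_res_count e (s k) (lam k) c)%:Z.
Proof. by rewrite /res_count (big_morph Posz PoszD (erefl _)). Qed.

Lemma msizeE r (lam : 'I_r -> seq nat) :
  (msize lam)%:Z = \sum_(k < r) (sumn (lam k))%:Z.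
Proof. by rewrite /msize (big_morph Posz PoszD (erefl _)). Qed.

Lemma part_res_count_out e s l c :
  (0 < e)%N -> ~~ (0 <= c < e%:Z) -> part_res_count e s l c = 0%N.
Proof.
move=> he hc; rewrite /part_res_count big1 // => x _; rewrite big1 // => y _.
by case: eqP => // hres; move: hc; rewrite -hres; lia.
Qed.

(* [floor_shift e c] increases by one exactly at the integers congruent to [c]
   mod [e], so its excess on a partition counts the nodes of residue [c]. *)
Definition floor_shift (e : nat) (c b : int) : int := ((b - c) %/ e%:Z)%Z.

Section FloorShift.
Variables (e : nat) (c : int).
Hypotheses (he : (0 < e)%N) (hc : 0 <= c < e%:Z).

Lemma floor_shift_succ t :
  floor_shift e c (t + 1) - floor_shift e c t = (((t + 1) %% e%:Z)%Z == c : nat)%:Z.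
Proof.
rewrite /floor_shift; have he' : 0 < e%:Z by lia.
have := divz_eq (t - c) e%:Z; have : 0 <= ((t - c) %% e%:Z)%Z < e%:Z by lia.
move: ((t - c) %/ e%:Z)%Z ((t - c) %% e%:Z)%Z => q rho hrho htE.
case: (ltrP (rho + 1) e%:Z) => hrho1.
  have -> : t + 1 - c = q * e%:Z + (rho + 1) by lia.
  have [-> _] := divmodz_mulD_small q he' (ltac:(lia) : 0 <= rho + 1 < e%:Z).
  case: (ltrP (rho + 1 + c) e%:Z) => h2.
    have -> : t + 1 = q * e%:Z + (rho + 1 + c) by lia.
    have [_ ->] := divmodz_mulD_small q he' (ltac:(lia) : 0 <= rho + 1 + c < e%:Z).
    by case: eqP => /=; lia.
  have -> : t + 1 = (q + 1) * e%:Z + (rho + 1 + c - e%:Z) by lia.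
  have [_ ->] := divmodz_mulD_small (q + 1) he'
    (ltac:(lia) : 0 <= rho + 1 + c - e%:Z < e%:Z).
  by case: eqP => /=; lia.
have -> : t + 1 - c = (q + 1) * e%:Z + 0 by lia.
have [-> _] := divmodz_mulD_small (q + 1) he' (ltac:(lia) : 0 <= (0 : int) < e%:Z).
have -> : t + 1 = (q + 1) * e%:Z + c by lia.
have [_ ->] := divmodz_mulD_small (q + 1) he' hc.
by rewrite eqxx /=; lia.
Qed.

Lemma floor_shift_addn u m :
  floor_shift e c (u + m%:Z) - floor_shift e c u =
  (\sum_(y < m) (((u + 1 + y%:Z) %% e%:Z)%Z == c : nat))%N%:Z.
Proof.
elim: m => [|m IH]; first by rewrite big_ord0 addr0 subrr.
rewrite big_ord_recr /= PoszD -IH.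
have -> : u + 1 + m%:Z = u + m%:Z + 1 by ring.
have -> : u + m.+1%:Z = u + m%:Z + 1 by lia.
by rewrite -floor_shift_succ; ring.
Qed.

Lemma excess_floor_shift s l :
  excess (floor_shift e c) s l = (part_res_count e s l c)%:Z.
Proof.
rewrite /excess /part_res_count big_mkord (big_morph Posz PoszD (erefl _)).
apply: eq_bigr => x _.
have -> : bead s l x = s - x.+1%:Z + (nth 0%N l x)%:Z by rewrite /bead; lia.
rewrite floor_shift_addn; congr Posz; apply: eq_bigr => y _.
by have -> : s - x.+1%:Z + 1 + y%:Z = s + y%:Z - x%:Z by lia.
Qed.

End FloorShift.

Lemma psi_floor_shift0 e r k b : (0 < e)%N ->
  psi e r k b = b + (r%:Z - 1) * e%:Z * floor_shift e 0 b + (r%:Z - k.+1%:Z) * e%:Z.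
Proof. by move=> he; rewrite /psi /floor_shift subr0; have := divz_eq b e%:Z; lia. Qed.

Lemma floor_shift_psi e r k b c : (0 < e)%N ->
  floor_shift e c (psi e r k b) =
  floor_shift e c b + (r%:Z - 1) * floor_shift e 0 b + (r%:Z - k.+1%:Z).
Proof.
move=> he; rewrite psi_floor_shift0 // /floor_shift subr0.
set q := (b %/ e%:Z)%Z.
have -> : b + (r%:Z - 1) * e%:Z * q + (r%:Z - k.+1%:Z) * e%:Z - c =
          ((r%:Z - 1) * q + (r%:Z - k.+1%:Z)) * e%:Z + (b - c) by ring.
by rewrite divzMDl; [ring | lia].
Qed.

Definition uglov_beads (e r : nat) (lam : 'I_r -> seq nat) (s : 'I_r -> int) (A : int) :=
  [seq psi e r k b | k : 'I_r <- enum 'I_r,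
                     b <- beads (s k) (lam k) (absz (s k - A * e%:Z)%R)].

Section UglovBeads.
Variables (e r : nat) (lam : 'I_r -> seq nat) (s : 'I_r -> int) (A : int).
Hypotheses (he : (0 < e)%N) (hlam : forall k, is_part (lam k))
  (hA : forall k, A * e%:Z <= s k - (size (lam k))%:Z).

Lemma mem_uglov_beads b :
  (uglov_set e lam s b /\ A * r%:Z * e%:Z <= b) <-> b \in uglov_beads e lam s A.
Proof.
split.
  case=> [[k [b' [hb' ->]]]]; rewrite psi_geE // => hle.
  apply/allpairsPdep; exists k, b'; split; rewrite ?mem_enum //.
  exact/mem_beads.
case/allpairsPdep=> k [b' [_ hin ->]].
have [hb hle] := (mem_beads (hlam k) b' (hA k)).2 hin.
by split; [exists k, b' | rewrite psi_geE].
Qed.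

Lemma uglov_beads_uniq : uniq (uglov_beads e lam s A).
Proof.
apply: allpairs_uniq_dep; first exact: enum_uniq.
  by move=> k _; apply: beads_uniq.
by move=> [k1 b1] [k2 b2] _ _ /= /psi_inj-/(_ he) [-> ->].
Qed.

Lemma uglov_set_low b : (0 < r)%N -> b < A * r%:Z * e%:Z -> uglov_set e lam s b.
Proof.
move=> hr hb; have [k [b' [hb' ->]]] := psi_surj he hr hb.
by exists k, b'; split=> //; apply: beta_set_low; have := hA k; lia.
Qed.

Lemma Psi_rel_exists_of_bound : (0 < r)%N -> exists lt st, Psi_rel e lam s lt st.
Proof.
move=> hr; set U := uglov_beads e lam s A.
have hsorted : sorted >%R (rev (sort <=%R U)).
  by rewrite rev_sorted sort_lt_sorted uglov_beads_uniq.
have hlow : all (>= (A * r%:Z * e%:Z)) (rev (sort <=%R U)).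
  by apply/allP => b; rewrite mem_rev mem_sort => /mem_uglov_beads[].
have [lt [st [hlt hbeta]]] := partition_of_beads hsorted hlow.
exists lt, st; split=> // b; rewrite hbeta mem_rev mem_sort.
split=> [[/mem_uglov_beads[] // | ]|hb]; first exact: uglov_set_low.
by case: (lerP (A * r%:Z * e%:Z) b) => hle; [left; apply/mem_uglov_beads | right].
Qed.

Variables (lt : seq nat) (st : int).
Hypotheses (hPsi : Psi_rel e lam s lt st) (hAt : A * r%:Z * e%:Z <= st - (size lt)%:Z).

Lemma perm_Psi_beads :
  perm_eq (beads st lt (absz (st - A * r%:Z * e%:Z)%R)) (uglov_beads e lam s A).
Proof.
have [hlt hbeta] := hPsi.
apply: uniq_perm; [exact: beads_uniq | exact: uglov_beads_uniq |] => b.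
apply/idP/idP => [/(mem_beads hlt b hAt)|/mem_uglov_beads] [hb hle].
  by apply/mem_uglov_beads; split=> //; apply/hbeta.
by apply/(mem_beads hlt b hAt); split=> //; apply/hbeta.
Qed.

Lemma Psi_charge_of_bound : st - A * r%:Z * e%:Z = \sum_(k < r) (s k - A * e%:Z).
Proof.
have := perm_size perm_Psi_beads.
rewrite size_map size_iota size_allpairs_dep sumnE big_map big_enum /= => hsize.
have -> : st - A * r%:Z * e%:Z = (absz (st - A * r%:Z * e%:Z)%R)%:Z by lia.
rewrite hsize (big_morph Posz PoszD (erefl _)); apply: eq_bigr => k _.
by rewrite size_map size_iota; have := hA k; lia.
Qed.

Lemma excess_Psi_of_bound (F H : int -> int) (cst : 'I_r -> int) :
  (forall (k : 'I_r) b, F (psi e r k b) = H b + cst k) ->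
  excess F st lt + \sum_(0 <= i < absz (st - A * r%:Z * e%:Z)%R) F (st - i.+1%:Z) =
  \sum_(k < r) \sum_(0 <= i < absz (s k - A * e%:Z)%R) (H (s k - i.+1%:Z) + cst k)
  + \sum_(k < r) excess H (s k) (lam k).
Proof.
move=> hF; rewrite addrC -sum_beads; last by lia.
rewrite (perm_big _ perm_Psi_beads) big_allpairs_dep big_enum -big_split /=.
apply: eq_bigr => k _; under eq_bigr do rewrite hF.
by rewrite sum_beads ?excess_addr_const //; have := hA k; lia.
Qed.
End UglovBeads.

Lemma exists_bead_bound (e r : nat) (xs : seq int) (f : 'I_r -> int) :
  (0 < e)%N -> (0 < r)%N ->
  exists A : int, {in xs, forall x, A * r%:Z * e%:Z <= x} /\ forall k, A * e%:Z <= f k.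
Proof.
move=> he hr; set ys := xs ++ [seq f k | k <- enum 'I_r].
set A := - \sum_(y <- ys) `|y|.
have hA0 : A <= 0 by rewrite oppr_le0 sumr_ge0.
have hA y : y \in ys -> A <= y.
  move=> hy; have : `|y| <= \sum_(y <- ys) `|y|.
    by rewrite (big_rem y hy) /= lerDl sumr_ge0.
  by rewrite /A; lia.
have mul_le (B : int) (n : nat) : B <= 0 -> (0 < n)%N -> B * n%:Z <= B by move=> ? ?; nia.
exists A; split=> [x hx | k].
  have := mul_le (A * r%:Z) e ltac:(nia) he; have := mul_le A r hA0 hr.
  by have := hA x; rewrite mem_cat hx; lia.
have := mul_le A e hA0 he; have : A <= f k.
  by apply: hA; rewrite mem_cat; apply/orP; right; apply/mapP; exists k; rewrite ?mem_enum.
lia.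
Qed.

Section PsiRel.
Variables (e r : nat) (s : 'I_r -> int).
Hypotheses (he : (0 < e)%N) (hr : (0 < r)%N).

Lemma Psi_rel_exists (lam : 'I_r -> seq nat) : (forall k, is_part (lam k)) ->
  exists lt st, Psi_rel e lam s lt st.
Proof.
move=> hlam.
have [A [_ hA]] := exists_bead_bound [::] (fun k => s k - (size (lam k))%:Z) he hr.
exact: (Psi_rel_exists_of_bound (A := A)).
Qed.

Lemma Psi_charge (lam : 'I_r -> seq nat) lt st : (forall k, is_part (lam k)) ->
  Psi_rel e lam s lt st -> st = \sum_(k < r) s k.
Proof.
move=> hlam hPsi.
have [A [hAt hAlam]] :=
  exists_bead_bound [:: st - (size lt)%:Z] (fun k => s k - (size (lam k))%:Z) he hr.
have := Psi_charge_of_bound he hlam hAlam hPsi (hAt _ (mem_head _ _)).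
rewrite sumrB sumr_const card_ord -mulr_natr natz => hcharge.
by apply: (addIr (- (A * e%:Z * r%:Z))); rewrite -hcharge; ring.
Qed.

End PsiRel.

Lemma sum_excess_linear r (lam : 'I_r -> seq nat) s F G a :
  \sum_(k < r) excess (fun b => F b + a * G b) (s k) (lam k) =
  \sum_(k < r) excess F (s k) (lam k) + a * \sum_(k < r) excess G (s k) (lam k).
Proof. by rewrite mulr_sumr -big_split; apply: eq_bigr => k _; rewrite excess_linear. Qed.

Lemma sum_excess_id r (lam : 'I_r -> seq nat) s :
  \sum_(k < r) excess id (s k) (lam k) = (msize lam)%:Z.
Proof. by rewrite msizeE; apply: eq_bigr => k _; rewrite excess_id. Qed.

Lemma sum_excess_floor_shift e c r (lam : 'I_r -> seq nat) s :
  (0 < e)%N -> 0 <= c < e%:Z ->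
  \sum_(k < r) excess (floor_shift e c) (s k) (lam k) = (res_count e lam s c)%:Z.
Proof.
by move=> he hc; rewrite res_countE; apply: eq_bigr => k _; rewrite excess_floor_shift.
Qed.

Section PsiBlocks.
Variables (e r : nat) (s : 'I_r -> int) (lam mu : 'I_r -> seq nat).
Variables (lt mt : seq nat) (st st' : int).
Hypotheses (he : (0 < e)%N) (hr : (0 < r)%N).
Hypotheses (hlam : forall k, is_part (lam k)) (hmu : forall k, is_part (mu k)).
Hypotheses (hPsi_lam : Psi_rel e lam s lt st) (hPsi_mu : Psi_rel e mu s mt st').

Lemma Psi_charge_eq : st = st'.
Proof. by rewrite (Psi_charge he hr hlam hPsi_lam) (Psi_charge he hr hmu hPsi_mu). Qed.

Lemma excess_Psi_sub (F H : int -> int) (cst : 'I_r -> int) :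
  (forall (k : 'I_r) b, F (psi e r k b) = H b + cst k) ->
  excess F st lt - excess F st' mt =
  \sum_(k < r) excess H (s k) (lam k) - \sum_(k < r) excess H (s k) (mu k).
Proof.
move=> hF; have hPsi_mu' := hPsi_mu; rewrite -Psi_charge_eq in hPsi_mu' *.
have [A [hAt hA]] := exists_bead_bound [:: st - (size lt)%:Z; st - (size mt)%:Z]
  (fun k => s k - (size (lam k))%:Z - (size (mu k))%:Z) he hr.
have hAlam k : A * e%:Z <= s k - (size (lam k))%:Z by have := hA k; lia.
have hAmu k : A * e%:Z <= s k - (size (mu k))%:Z by have := hA k; lia.
have := excess_Psi_of_bound he hlam hAlam hPsi_lam (hAt _ (mem_head _ _)) hF.
have := excess_Psi_of_bound he hmu hAmu hPsi_mu' (hAt _ (mem_last _ _)) hF.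
lia.
Qed.

Lemma Psi_sumn_sub :
  (sumn lt)%:Z - (sumn mt)%:Z =
  (msize lam)%:Z - (msize mu)%:Z +
  (r%:Z - 1) * e%:Z * ((res_count e lam s 0)%:Z - (res_count e mu s 0)%:Z).
Proof.
rewrite -(excess_id st lt) -(excess_id st' mt).
rewrite (@excess_Psi_sub id (fun b => id b + (r%:Z - 1) * e%:Z * floor_shift e 0 b)
  (fun k => (r%:Z - k.+1%:Z) * e%:Z)); last by move=> k b; rewrite psi_floor_shift0.
by rewrite !sum_excess_linear !sum_excess_id !sum_excess_floor_shift //; ring.
Qed.

Lemma Psi_res_count_sub c : 0 <= c < e%:Z ->
  (part_res_count e st lt c)%:Z - (part_res_count e st' mt c)%:Z =
  (res_count e lam s c)%:Z - (res_count e mu s c)%:Z +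
  (r%:Z - 1) * ((res_count e lam s 0)%:Z - (res_count e mu s 0)%:Z).
Proof.
move=> hc; rewrite -(excess_floor_shift he hc st lt) -(excess_floor_shift he hc st' mt).
rewrite (@excess_Psi_sub _ (fun b => floor_shift e c b + (r%:Z - 1) * floor_shift e 0 b)
  (fun k => r%:Z - k.+1%:Z)); last by move=> k b; rewrite floor_shift_psi.
by rewrite !sum_excess_linear !sum_excess_floor_shift //; ring.
Qed.

End PsiBlocks.

Theorem proposition2p8 (e : nat) (he : (2 <= e)%N) (r : nat) (hr : (1 <= r)%N)
  (s : 'I_r -> int) (lam mu : 'I_r -> seq nat)
  (hlam : forall k, is_part (lam k)) (hmu : forall k, is_part (mu k)) :
  block_equiv e lam s mu s ->
  (exists (lt : seq nat) (st : int) (mt : seq nat) (st' : int),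
      Psi_rel e lam s lt st /\ Psi_rel e mu s mt st') /\
  (forall (lt : seq nat) (st : int) (mt : seq nat) (st' : int),
      Psi_rel e lam s lt st -> Psi_rel e mu s mt st' ->
      block_equiv1 e lt st mt st').
Proof.
have he0 : (0 < e)%N by lia.
move=> [_ [hsize hres]]; split.
  have [lt [st hPsi_lam]] := Psi_rel_exists s he0 hr hlam.
  have [mt [st' hPsi_mu]] := Psi_rel_exists s he0 hr hmu.
  by exists lt, st, mt, st'.
move=> lt st mt st' hPsi_lam hPsi_mu.
have hst := Psi_charge_eq he0 hr hlam hmu hPsi_lam hPsi_mu; subst st'.
split=> //; split.
  rewrite /msize !big_ord1.
  by have := Psi_sumn_sub he0 hr hlam hmu hPsi_lam hPsi_mu; rewrite hsize hres; lia.
move=> c; rewrite !res_count1.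
have [hc|hc] := boolP (0 <= c < e%:Z); last by rewrite !part_res_count_out.
by have := Psi_res_count_sub he0 hr hlam hmu hPsi_lam hPsi_mu hc; rewrite !hres; lia.
Qed.
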